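(* Let $G$ be a finite connected graph with a real structure and let $D_1,D_2$ be two linearly equivalent real divisors on $G$. Let $G'$ be a connected component of $G(\mathbb R)$. Then $\deg(D_1|_{G'})\equiv\deg(D_2|_{G'})\pmod 2$, where $\deg(D|_{G'})=\sum_{v\in V(G')}D(v)$.
   Context: A finite graph $G$ has vertex set $V(G)$, edge set $E(G)$ and incidence function $\psi$ assigning to each edge a set of one or two vertices (loops and multiple edges allowed). A real structure on $G$ is a pair of involutions of $V(G)$ and $E(G)$, written $v\mapsto\overline v$, $e\mapsto\overline e$, with $\psi(\overline e)=\overline{\psi(e)}$. A vertex/edge is real if fixed by the involution; a real edge $e$ is non-isolated if both ends are real vertices. $G(\mathbb R)$ is the subgraph whose vertices are the real vertices and whose edges are the non-isolated real edges. A divisor is a formal $\mathbb Z$-combination $D=\sum_vD(v)v$ of vertices; $\overline D(v)=D(\overline v)$ and $D$ is real if $\overline D=D$. For $f:V(G)\to\mathbb Z$, $\Delta(f)(v)=\sum_{e\in E(G),\,\psi(e)=\{v,w\}}(f(w)-f(v))$; $D_1\sim D_2$ iff $D_2-D_1=\Delta(f)$ for some $f$. *)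

From mathcomp Require Import all_boot all_order all_algebra.
Set Implicit Arguments. Unset Strict Implicit. Unset Printing Implicit Defensive.
Import GRing.Theory Num.Theory.
Local Open Scope ring_scope.

(* A finite graph with loops and multiple edges: vertex type V, edge type E,
   incidence psi assigning to each edge a set of one or two vertices. *)
Definition is_graph (V E : finType) (psi : E -> {set V}) : Prop :=
  forall e, (0 < #|psi e| <= 2)%N.

Definition adj (V E : finType) (psi : E -> {set V}) : rel V :=
  fun u v => [exists e, psi e == [set u; v]].

Definition connected_graph (V E : finType) (psi : E -> {set V}) : Prop :=
  forall u v, connect (adj psi) u v.

Definition real_structure (V E : finType) (psi : E -> {set V})
  (sV : V -> V) (sE : E -> E) : Prop :=
  [/\ involutive sV, involutive sE & forall e, psi (sE e) = sV @: psi e].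

(* adjacency in G(R): both vertices real, joined by a real edge
   (which is then non-isolated) *)
Definition real_adj (V E : finType) (psi : E -> {set V})
  (sV : V -> V) (sE : E -> E) : rel V :=
  fun u v => [&& sV u == u, sV v == v &
               [exists e, (sE e == e) && (psi e == [set u; v])]].

Definition real_component (V E : finType) (psi : E -> {set V})
  (sV : V -> V) (sE : E -> E) (C : {set V}) : Prop :=
  exists2 v, sV v = v & C = [set w | connect (real_adj psi sV sE) v w].

(* Laplacian: Delta f v = sum over edges e with psi e = {v,w} of (f w - f v).
   Summing over all endpoints w of e gives (f v - f v) + (f w - f v) for a
   non-loop and 0 for a loop. *)
Definition laplacian (V E : finType) (psi : E -> {set V}) (f : V -> int)
  (v : V) : int :=
  \sum_(e | v \in psi e) \sum_(w in psi e) (f w - f v).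

Definition lin_equiv (V E : finType) (psi : E -> {set V})
  (D1 D2 : V -> int) : Prop :=
  exists f : V -> int, forall v, D2 v - D1 v = laplacian psi f v.

Definition real_divisor (V : finType) (sV : V -> V) (D : V -> int) : Prop :=
  forall v, D (sV v) = D v.

Definition deg_on (V : finType) (D : V -> int) (C : {set V}) : int :=
  \sum_(v in C) D v.

(* Write D2 - D1 = Delta f.  Since the Laplacian commutes with the real
   structure and D1, D2 are real, f - f o sigma is harmonic, hence constant on
   the connected graph G; it vanishes at a real vertex, so f is real.  The
   degree of Delta f on a real component C is a sum of contributions of the
   edges.  Conjugate edges contribute equally, and a real edge meeting C has
   both ends in C, so its two contributions f w - f v and f v - f w cancel.
   Hence deg (Delta f)|_C is even. *)
From mathcomp Require Import all_boot all_order all_algebra.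
From mathcomp Require Import ring.
Set Implicit Arguments. Unset Strict Implicit. Unset Printing Implicit Defensive.
Import Order.TTheory GRing.Theory Num.Theory.
Local Open Scope ring_scope.

Lemma sum_involution_double (T : finType) (R : nmodType) (s : T -> T)
    (h : T -> R) :
  involutive s -> (forall x, h (s x) = h x) -> (forall x, s x = x -> h x = 0) ->
  \sum_x h x = (\sum_(x | (enum_rank x < enum_rank (s x))%N) h x) *+ 2.
Proof.
move=> sK hs hfix; pose r (x : T) := nat_of_ord (enum_rank x).
rewrite (bigID (fun x => r x < r (s x))%N) /= mulr2n; congr (_ + _).
rewrite (bigID (fun x => r (s x) < r x)%N) /= [X in _ + X]big1 ?addr0;
  last first.
  move=> x; rewrite -!leqNgt => /andP[le_sx le_xs]; apply: hfix.
  by apply/enum_rank_inj/val_inj/eqP; rewrite eqn_leq le_sx le_xs.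
rewrite (reindex_inj (inv_inj sK)) /=; apply: eq_big => [x|x _]; last exact: hs.
by rewrite sK andb_idl // => /ltnW; rewrite leqNgt.
Qed.

Section Laplacian.
Variables (V E : finType) (psi : E -> {set V}).

Lemma laplacianB (f g : V -> int) v :
  laplacian psi (fun x => f x - g x) v = laplacian psi f v - laplacian psi g v.
Proof.
rewrite /laplacian -sumrB; apply: eq_bigr => e _.
by rewrite -sumrB; apply: eq_bigr => w _; ring.
Qed.

Lemma adj_sym : symmetric (adj psi).
Proof. by move=> u v; rewrite /adj setUC. Qed.

Lemma harmonic_max_adj (g : V -> int) x y :
  (forall v, laplacian psi g v = 0) -> (forall w, g w <= g x) ->
  adj psi x y -> g y = g x.
Proof.
move=> harm gmax /existsP[e /eqP psi_e].
have gx_ge w : 0 <= g x - g w by rewrite subr_ge0.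
have sum0 : \sum_(e | x \in psi e) \sum_(w in psi e) (g x - g w) = 0.
  apply/eqP; rewrite -oppr_eq0 -sumrN -[X in _ == X](harm x).
  by apply/eqP/eq_bigr => e' _; rewrite -sumrN; apply: eq_bigr => w _; ring.
have [x_e y_e] : x \in psi e /\ y \in psi e by rewrite psi_e !inE !eqxx ?orbT.
have sum_x0 := psumr_eq0P (fun e _ => sumr_ge0 _ (fun w _ => gx_ge w)) sum0 x_e.
have /eqP := psumr_eq0P (fun w _ => gx_ge w) sum_x0 y_e.
by rewrite subr_eq0 => /eqP.
Qed.

Lemma harmonic_const (g : V -> int) :
  connected_graph psi -> (forall v, laplacian psi g v = 0) ->
  forall u v, g u = g v.
Proof.
move=> conn harm u v.
have [m _ gmax] := arg_maxP g (erefl true : xpredT u).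
suff gm x : g x = g m by rewrite !gm.
have cl : closed (adj psi) [pred y | g y == g m].
  have step a b : adj psi a b -> g a = g m -> g b = g m.
    move=> ab ga; rewrite (harmonic_max_adj harm _ ab) // => w.
    by rewrite ga; apply: gmax.
  move=> a b ab /=; apply/eqP/eqP; first exact: step.
  by apply: step; rewrite adj_sym.
by have := closed_connect cl (conn m x); rewrite !inE eqxx => /esym/eqP.
Qed.

Definition edge_flux (C : {set V}) (f : V -> int) (e : E) : int :=
  \sum_(v in C | v \in psi e) \sum_(w in psi e) (f w - f v).

Lemma sum_laplacian_flux (C : {set V}) (f : V -> int) :
  \sum_(v in C) laplacian psi f v = \sum_e edge_flux C f e.
Proof. exact: exchange_big_dep. Qed.

Lemma edge_flux_subset (C : {set V}) (f : V -> int) e :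
  psi e \subset C -> edge_flux C f e = 0.
Proof.
move=> /subsetP sub; rewrite /edge_flux (eq_bigl (mem (psi e))); last first.
  by move=> v; apply/andb_idl/sub.
under eq_bigr do rewrite sumrB.
by rewrite sumrB [X in _ - X]exchange_big subrr.
Qed.

Lemma edge_flux_disjoint (C : {set V}) (f : V -> int) e :
  [disjoint psi e & C] -> edge_flux C f e = 0.
Proof.
move=> dis; rewrite /edge_flux big_pred0 // => v.
by apply/andP => -[vC v_e]; rewrite (disjointFr dis v_e) in vC.
Qed.

End Laplacian.

Section RealStructure.
Variables (V E : finType) (psi : E -> {set V}) (sV : V -> V) (sE : E -> E).
Hypotheses (sVK : involutive sV) (sEK : involutive sE)
           (psi_conj : forall e, psi (sE e) = sV @: psi e).

Lemma laplacian_conj (f : V -> int) v :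
  laplacian psi (f \o sV) v = laplacian psi f (sV v).
Proof.
rewrite /laplacian (reindex_inj (inv_inj sEK)).
have sV_inj := inv_inj sVK.
apply: eq_big => [e|e _]; first by rewrite psi_conj -{1}(sVK v) mem_imset.
rewrite psi_conj big_imset /=; last by move=> ? ? _ _; apply: sV_inj.
by apply: eq_bigr => w _; rewrite sVK.
Qed.

Lemma real_potential (D1 D2 f : V -> int) v0 :
  connected_graph psi -> real_divisor sV D1 -> real_divisor sV D2 ->
  (forall v, D2 v - D1 v = laplacian psi f v) -> sV v0 = v0 ->
  forall v, f (sV v) = f v.
Proof.
move=> conn realD1 realD2 lapf real_v0 v.
have harm u : laplacian psi (fun x => f x - f (sV x)) u = 0.
  by rewrite laplacianB (laplacian_conj f u) -!lapf realD1 realD2 subrr.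
have /eqP := harmonic_const conn harm v v0.
by rewrite real_v0 subrr subr_eq0 => /eqP.
Qed.

Section RealComponent.
Variable C : {set V}.
Hypothesis compC : real_component psi sV sE C.

Lemma real_component_real w : w \in C -> sV w = w.
Proof.
case: compC => v0 real_v0 ->; rewrite inE => /connectP[p + ->] {w}.
elim: p v0 real_v0 => [|y p IHp] x real_x //= /andP[/and3P[_ /eqP real_y _]].
exact: IHp.
Qed.

Lemma real_component_closed v w : v \in C -> real_adj psi sV sE v w -> w \in C.
Proof.
case: compC => v0 _ ->; rewrite !inE => vC vw.
exact: connect_trans vC (connect1 vw).
Qed.

Lemma real_edge_subset e v :
  is_graph psi -> sE e = e -> v \in psi e -> v \in C -> psi e \subset C.
Proof.
move=> graph real_e v_e vC; apply/subsetP => w w_e.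
have [<-//|neq_vw] := eqVneq v w.
have psi_e : psi e = [set v; w].
  apply/eqP; rewrite eq_sym eqEcard cards2 neq_vw.
  have /andP[_ ->] := graph e; rewrite andbT.
  by apply/subsetP => x; rewrite !inE => /orP[] /eqP ->.
have real_w : sV w = w.
  move: w_e; rewrite -{1}real_e psi_conj psi_e => /imsetP[x].
  rewrite !inE => /orP[] /eqP -> // w_v.
  by move: neq_vw; rewrite w_v real_component_real // eqxx.
apply: (real_component_closed vC).
rewrite /real_adj real_w (real_component_real vC) !eqxx.
by apply/existsP; exists e; rewrite real_e psi_e !eqxx.
Qed.

Lemma edge_flux_conj (f : V -> int) :
  (forall v, f (sV v) = f v) ->
  forall e, edge_flux psi C f (sE e) = edge_flux psi C f e.
Proof.
move=> real_f e; rewrite /edge_flux !big_mkcondr; apply: eq_bigr => v vC.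
have sV_inj := inv_inj sVK.
rewrite psi_conj -{1}(real_component_real vC) mem_imset //; case: ifP => // _.
rewrite big_imset /=; last by move=> ? ? _ _; apply: sV_inj.
by apply: eq_bigr => w _; rewrite real_f.
Qed.

Lemma real_edge_flux (f : V -> int) e :
  is_graph psi -> sE e = e -> edge_flux psi C f e = 0.
Proof.
move=> graph real_e; have [dis|] := boolP [disjoint psi e & C].
  exact: edge_flux_disjoint.
case/pred0Pn => v /andP[v_e vC].
exact/edge_flux_subset/(real_edge_subset graph real_e v_e vC).
Qed.

End RealComponent.
End RealStructure.

Theorem theorem2 (V E : finType) (psi : E -> {set V}) (sV : V -> V) (sE : E -> E)
  (hG : is_graph psi) (hconn : connected_graph psi)
  (hreal : real_structure psi sV sE)
  (D1 D2 : V -> int) (hD1 : real_divisor sV D1) (hD2 : real_divisor sV D2)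
  (hlin : lin_equiv psi D1 D2)
  (C : {set V}) (hC : real_component psi sV sE C) :
  (deg_on D1 C = deg_on D2 C %[mod 2])%Z.
Proof.
have [sVK sEK psi_conj] := hreal; have [f lapf] := hlin.
have real_f : forall v, f (sV v) = f v.
  have [v0 real_v0 _] := hC.
  exact: (real_potential sVK sEK psi_conj hconn hD1 hD2 lapf real_v0).
have -> : deg_on D2 C = deg_on D1 C + \sum_e edge_flux psi C f e.
  rewrite -sum_laplacian_flux /deg_on -big_split /=.
  by apply: eq_bigr => v _; rewrite -lapf addrC subrK.
rewrite (sum_involution_double sEK (edge_flux_conj sVK psi_conj hC real_f))
  => [|e]; last exact: real_edge_flux.
set S := \sum_(e | _) _.
by rewrite addrC -(mulr_natr S 2) modzMDl.
Qed.
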